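(* Consider the lower-bound construction with parameters $n_1,n_2,d,d_s,x$ where $0<x\le d_s$, $d\ge\max\{d_s\log n_1,\log^2 n_1\}$, $n_1\ge 2d^3$, and the $d$-regular graph on $S_1$ is an expander (its normalized Laplacian has spectral gap bounded below by an absolute constant). Let $r_{S_1}(s,t)$ be the effective resistance between $s$ and $t$ in the subgraph induced on $S_1\cup\{s,t\}$ and $r_{S_2}(s,t)$ the one in the subgraph induced on $S_2\cup\{s,t\}$ (when $x<d_s$). Then $$r_{S_1}(s,t)=\frac1x+O\Big(\frac{\log n_1}{dx}\Big)=\frac1x+O\Big(\frac{1}{d_s x}\Big),\qquad r_{S_2}(s,t)=\frac{2}{d_s-x}.$$
   Context: Lower-bound construction: $S_1$ and $S_2$ are disjoint vertex sets with $|S_1|=n_1$, $|S_2|=n_2$, $n_2\ll n_1$. On $S_1$ there is a $d$-regular expander graph; $S_2$ has no internal edges. A source vertex $s$ is added with $d_s$ neighbors: $x$ vertices $\mathcal{N}_1\subset S_1$ and $d_s-x$ vertices $\mathcal{N}_2\subset S_2$, chosen uniformly at random. A sink vertex $t$ is added and joined to every vertex of $S_1\cup S_2$. There are no other edges (in particular no edge $st$ and no edges between $S_1$ and $S_2$). Effective resistance in a graph $H$ is $(\mathbf{e}_s-\mathbf{e}_t)^T\mathbf{L}_H^\dagger(\mathbf{e}_s-\mathbf{e}_t)$, $\mathbf{L}_H$ the Laplacian of $H$. Constants hidden in $O(\cdot)$ are absolute (may depend on the expansion constant of $S_1$). *)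

From HB Require Import structures.
From mathcomp Require Import all_boot all_order all_algebra.
From mathcomp Require Import reals exp.
From Stdlib Require Import ClassicalEpsilon.
Set Implicit Arguments. Unset Strict Implicit. Unset Printing Implicit Defensive.
Import Order.TTheory GRing.Theory Num.Theory.
Local Open Scope ring_scope.

Section Graphs.
Variable R : realType.

(* Moore--Penrose pseudoinverse, characterised by the four Penrose equations
   (it exists and is unique for every real matrix). *)
Definition is_MP_pinv (n : nat) (A P : 'M[R]_n) : Prop :=
  [/\ A *m P *m A = A, P *m A *m P = P, (A *m P)^T = A *m P & (P *m A)^T = P *m A].

Definition mp_pinv (n : nat) (A : 'M[R]_n) : 'M[R]_n :=
  epsilon (inhabits 0) (fun P => is_MP_pinv A P).

(* Simple graphs on a finite type T: a symmetric irreflexive relation. *)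
Definition gdeg (T : finType) (e : rel T) (v : T) : nat := #|[set u | e v u]|.

Definition laplacian (T : finType) (e : rel T) : 'M[R]_#|T| :=
  \matrix_(i, j) if i == j then (gdeg e (enum_val i))%:R
                 else - (e (enum_val i) (enum_val j))%:R.

Definition eff_res (T : finType) (e : rel T) (s t : T) : R :=
  let b : 'cV[R]_#|T| :=
    \col_i ((enum_val i == s)%:R - (enum_val i == t)%:R) in
  (b^T *m mp_pinv (laplacian e) *m b) 0 0.

Definition induced (T : finType) (e : rel T) (U : {set T}) :
  rel {x : T | x \in U} := fun x y => e (val x) (val y).

(* Effective resistance between s and t in the subgraph induced on U
   (0 by convention if s or t is not in U; never used in that case). *)
Definition eff_res_in (T : finType) (e : rel T) (U : {set T}) (s t : T) : R :=
  match @insub T (fun x => x \in U) {x : T | x \in U} s,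
        @insub T (fun x => x \in U) {x : T | x \in U} t with
  | Some s', Some t' => eff_res (@induced T e U) s' t'
  | _, _ => 0
  end.

Definition regular_simple (n : nat) (e : rel 'I_n) (d : nat) : Prop :=
  [/\ forall i j, e i j = e j i, forall i, ~~ e i i & forall i, gdeg e i = d].

Definition norm_laplacian (n : nat) (e : rel 'I_n) : 'M[R]_n :=
  \matrix_(i, j) ((i == j)%:R
     - (e i j)%:R / Num.sqrt ((gdeg e i)%:R * (gdeg e j)%:R)).

(* Spectral gap lambda_2(M) >= c for a real symmetric PSD matrix M with
   smallest eigenvalue 0: every eigenvalue below c is 0 and the 0-eigenspace
   is one-dimensional (geometric = algebraic multiplicity for symmetric M). *)
Definition spectral_gap_ge (n : nat) (M : 'M[R]_n) (c : R) : Prop :=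
  forall a : R, eigenvalue M a -> a < c ->
    a = 0 /\ \rank (eigenspace M a) = 1%N.

End Graphs.

(* Vertex set of the construction: inl (inl i) = vertex i of S_1,
   inl (inr k) = vertex k of S_2, inr true = s, inr false = t. *)
Definition cvert (n1 n2 : nat) : finType := (('I_n1 + 'I_n2) + bool)%type.

Definition src (n1 n2 : nat) : cvert n1 n2 := inr true.
Definition snk (n1 n2 : nat) : cvert n1 n2 := inr false.

Definition cgraph (n1 n2 : nat) (E1 : rel 'I_n1) (N1 : {set 'I_n1})
  (N2 : {set 'I_n2}) : rel (cvert n1 n2) :=
  fun u v =>
    match u, v with
    | inl (inl i), inl (inl j) => E1 i j
    | inr true, inl (inl i) => i \in N1
    | inl (inl i), inr true => i \in N1
    | inr true, inl (inr k) => k \in N2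
    | inl (inr k), inr true => k \in N2
    | inr false, inl _ => true
    | inl _, inr false => true
    | _, _ => false
    end.

Definition U1 (n1 n2 : nat) : {set cvert n1 n2} :=
  [set v | match v with inl (inr _) => false | _ => true end].
Definition U2 (n1 n2 : nat) : {set cvert n1 n2} :=
  [set v | match v with inl (inl _) => false | _ => true end].

(* The effective resistance between s and t is F s - F t for any potential F
   with L F = e_s - e_t.  On S_2 + {s, t} such a potential is explicit.  On
   S_1 + {s, t}, normalise F t = 0, let W be the potential on S_1, j_i the
   current from s into i, and y = W - 1/n_1.  Then r = |j|^2 + <j, y> + 1/n_1,
   and the energy identity together with the spectral gap, read as a Poincare
   inequality for mean-zero vectors, gives (c d + 1) |y|^2 <= <j, y>.  Since j
   sums to 1 on the x neighbours of s, 1/x <= |j|^2 <= 1/x + |y|^2; with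
   <j, y>^2 <= |j|^2 |y|^2 this yields 1/x <= r <= 1/x + 1/(c d x) + 1/n_1,
   and the constraints on d, d_s and n_1 turn the error into the stated
   O(log n_1 / (d x)) and O(1 / (d_s x)). *)

From HB Require Import structures.
From mathcomp Require Import all_boot all_order all_algebra.
From mathcomp Require Import reals exp classical_sets.
From mathcomp Require Import ring lra zify.
From Stdlib Require Import ClassicalEpsilon Classical.
Set Implicit Arguments. Unset Strict Implicit. Unset Printing Implicit Defensive.
Import Order.TTheory GRing.Theory Num.Theory.
Local Open Scope ring_scope.

Lemma nonunitmx_ker (F : fieldType) n (B : 'M[F]_n) :
  B \notin unitmx -> exists2 v : 'rV[F]_n, v *m B = 0 & v != 0.
Proof.
rewrite -row_free_unit => /negP fB; apply: NNPP => noker; apply: fB.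
by apply: inj_row_free => v vB; apply/eqP/contraT => v0; case: noker; exists v.
Qed.

Section Gram.
Variable R : realFieldType.

Lemma mul_rV_tr_eq0 (k : nat) (u : 'rV[R]_k) : u *m u^T = 0 -> u = 0.
Proof.
move=> /(congr1 (fun M : 'M_1 => M 0 0)); rewrite !mxE => /eqP.
rewrite psumr_eq0 => [/allP uu0|j _]; last by rewrite mxE -expr2 sqr_ge0.
apply/rowP => i; rewrite mxE; move: (uu0 i (mem_index_enum _)).
by rewrite mxE -expr2 sqrf_eq0 => /eqP.
Qed.

Lemma row_free_gram_unit m r (B : 'M[R]_(m, r)) : row_free B -> B *m B^T \in unitmx.
Proof.
move=> fB; rewrite -row_free_unit; apply: inj_row_free => v.
move=> /(congr1 (fun M => M *m v^T)); rewrite mul0mx !mulmxA -mulmxA -trmx_mul.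
by move=> /mul_rV_tr_eq0 vB; apply/eqP; rewrite -(mulmx_free_eq0 _ fB) vB.
Qed.

End Gram.

Section Pseudoinverse.
Variable R : realType.

Lemma is_MP_pinv_factor n r (B : 'M[R]_(n, r)) (C : 'M[R]_(r, n)) :
  B^T *m B \in unitmx -> C *m C^T \in unitmx ->
  is_MP_pinv (B *m C) (C^T *m invmx (C *m C^T) *m invmx (B^T *m B) *m B^T).
Proof.
move=> uB uC.
set iB := invmx (B^T *m B); set iC := invmx (C *m C^T).
have sB : iB^T = iB by rewrite /iB trmx_inv trmx_mul trmxK.
have sC : iC^T = iC by rewrite /iC trmx_inv trmx_mul trmxK.
have hB : iB *m (B^T *m B) = 1%:M by rewrite mulVmx.
have hC : (C *m C^T) *m iC = 1%:M by rewrite mulmxV.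
have AP : (B *m C) *m (C^T *m iC *m iB *m B^T) = B *m iB *m B^T.
  by rewrite !mulmxA -(mulmxA B C) -(mulmxA B (C *m C^T)) hC mulmx1.
have PA : (C^T *m iC *m iB *m B^T) *m (B *m C) = C^T *m iC *m C.
  by rewrite !mulmxA -(mulmxA _ B^T B) -(mulmxA _ iB) hB mulmx1.
split.
- by rewrite AP !mulmxA -(mulmxA _ B^T B) -(mulmxA _ iB) hB mulmx1.
- rewrite PA !mulmxA -(mulmxA (C^T *m iC) C C^T).
  by rewrite -(mulmxA (C^T *m iC) (C *m C^T) iC) hC mulmx1.
- by rewrite AP !trmx_mul trmxK sB mulmxA.
- by rewrite PA !trmx_mul trmxK sC mulmxA.
Qed.

Lemma mp_pinvP n (A : 'M[R]_n) : is_MP_pinv A (mp_pinv A).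
Proof.
apply: (epsilon_spec (inhabits 0) (fun P => is_MP_pinv A P)).
have fB : row_free (col_base A)^T.
  by rewrite /row_free mxrank_tr; exact: col_base_full.
have uB : (col_base A)^T *m col_base A \in unitmx.
  by have := row_free_gram_unit fB; rewrite trmxK.
have uC := row_free_gram_unit (row_base_free A).
by have := is_MP_pinv_factor uB uC; rewrite mulmx_base => H; eexists; exact: H.
Qed.

End Pseudoinverse.

Section GraphLaplacian.
Variables (R : realType) (T : finType) (e : rel T).
Hypothesis esym : forall u w, e u w = e w u.
Hypothesis eirr : forall u, e u u = false.

Definition lap (f : T -> R) (u : T) : R := \sum_w (e u w)%:R * (f u - f w).

Definition dipole (s t u : T) : R := (u == s)%:R - (u == t)%:R.

Definition col_of (f : T -> R) : 'cV[R]_#|T| := \col_i f (enum_val i).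

Lemma sum_enum_val (F : T -> R) : \sum_(i < #|T|) F (enum_val i) = \sum_u F u.
Proof.
symmetry; rewrite (reindex (@enum_val T (pred_of_simpl (@predT T)))) //.
exact: onW_bij (enum_val_bij T).
Qed.

Lemma sum_enum_rank (G : 'I_#|T| -> R) : \sum_i G i = \sum_u G (enum_rank u).
Proof. by rewrite -sum_enum_val; apply: eq_bigr => i _; rewrite enum_valK. Qed.

Lemma sumr_delta (F : T -> R) s : \sum_u F u * (u == s)%:R = F s.
Proof.
rewrite (bigD1 s) //= eqxx mulr1 big1 ?addr0 // => u /negbTE ->.
by rewrite mulr0.
Qed.

Lemma gdegE u : (gdeg e u)%:R = \sum_w (e u w)%:R :> R.
Proof.
rewrite /gdeg -sum1_card natr_sum big_mkcond /=; apply: eq_bigr => w _.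
by rewrite inE; case: (e u w).
Qed.

Lemma laplacianE : laplacian R e = \matrix_(i, j)
   ((i == j)%:R * (gdeg e (enum_val i))%:R - (e (enum_val i) (enum_val j))%:R).
Proof.
apply/matrixP => i j; rewrite !mxE; case: eqP => [->|_].
  by rewrite eirr mul1r subr0.
by rewrite mul0r sub0r.
Qed.

Lemma tr_laplacian : (laplacian R e)^T = laplacian R e.
Proof.
apply/matrixP => i j; rewrite !laplacianE !mxE.
case: (eqVneq i j) => [->//|ne].
have ne' := ne; rewrite eq_sym in ne'.
by rewrite ?(negbTE ne) ?(negbTE ne') !mul0r esym.
Qed.

Lemma laplacian_col f i : (laplacian R e *m col_of f) i 0 = lap f (enum_val i).
Proof.
rewrite laplacianE !mxE /lap.
under eq_bigr => j _ do rewrite !mxE mulrBl.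
rewrite sumrB (bigD1 i) //= eqxx mul1r big1 ?addr0; last first.
  by move=> j /negbTE; rewrite eq_sym => ->; rewrite !mul0r.
under [in RHS]eq_bigr => w _ do rewrite mulrBr.
rewrite sumrB -big_distrl /= -gdegE.
by rewrite (sum_enum_val (fun w => (e (enum_val i) w)%:R * f w)) mulrC.
Qed.

(* Since L L^+ L = L, any f with L f = e_s - e_t computes the quadratic form. *)
Lemma eff_res_potential (s t : T) (f : T -> R) :
  (forall u, lap f u = dipole s t u) -> eff_res R e s t = f s - f t.
Proof.
move=> Hf.
have Lb : laplacian R e *m col_of f = \col_i dipole s t (enum_val i).
  by apply/colP => i; rewrite laplacian_col Hf mxE.
rewrite /eff_res -[X in X^T *m _ *m X]/(\col_i dipole s t (enum_val i)) -Lb.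
have [LPL _ _ _] := mp_pinvP (laplacian R e).
rewrite trmx_mul tr_laplacian -!mulmxA (mulmxA (laplacian R e)).
rewrite (mulmxA _ (laplacian R e)) LPL Lb mxE.
under eq_bigr => i _ do rewrite !mxE.
rewrite (sum_enum_val (fun u => f u * dipole s t u)).
under eq_bigr => u _ do rewrite /dipole mulrBr.
by rewrite sumrB !sumr_delta.
Qed.

Lemma sum_lap (f : T -> R) : \sum_u lap f u = 0.
Proof.
have swap : \sum_u lap f u = \sum_u \sum_w (e u w)%:R * (f w - f u).
  rewrite exchange_big; apply: eq_bigr => u _; rewrite /lap.
  by apply: eq_bigr => w _; rewrite esym.
have : \sum_u lap f u = - \sum_u lap f u.
  rewrite {1}swap -sumrN; apply: eq_bigr => u _.
  by rewrite /lap -sumrN; apply: eq_bigr => w _; ring.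
lra.
Qed.

Lemma lap_energy (g : T -> R) :
  \sum_u \sum_w (e u w)%:R * (g u - g w) ^+ 2 = 2 * \sum_u g u * lap g u.
Proof.
have -> : \sum_u \sum_w (e u w)%:R * (g u - g w) ^+ 2 =
   \sum_u \sum_w (e u w)%:R * (g u * (g u - g w)) +
   \sum_u \sum_w (e u w)%:R * (g w * (g w - g u)).
  rewrite -big_split /=; apply: eq_bigr => u _; rewrite -big_split /=.
  by apply: eq_bigr => w _; rewrite -mulrDr; congr (_ * _); ring.
rewrite [X in _ + X]exchange_big /=.
under [X in _ + X]eq_bigr => u _ do under eq_bigr => w _ do rewrite esym.
rewrite mulr_natl mulr2n; congr (_ + _); rewrite /lap.
  by apply: eq_bigr => u _; rewrite big_distrr; apply: eq_bigr => w _ /=; ring.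
by apply: eq_bigr => u _; rewrite big_distrr; apply: eq_bigr => w _ /=; ring.
Qed.

Lemma lap_ge0 (g : T -> R) : 0 <= \sum_u g u * lap g u.
Proof.
rewrite -(@pmulr_rge0 _ 2) // -lap_energy.
by do 2![apply: sumr_ge0 => ? _]; rewrite mulr_ge0 ?sqr_ge0.
Qed.

Lemma harmonic_edge_eq (g : T -> R) u w :
  (forall v, lap g v = 0) -> e u w -> g u = g w.
Proof.
move=> g_harm euw.
have /eqP : \sum_u \sum_w (e u w)%:R * (g u - g w) ^+ 2 = 0.
  by rewrite lap_energy big1 ?mulr0 // => v _; rewrite g_harm mulr0.
have term_ge0 u' w' : 0 <= (e u' w')%:R * (g u' - g w') ^+ 2 :> R.
  by rewrite mulr_ge0 ?sqr_ge0.
rewrite psumr_eq0 => [/allP/(_ u (mem_index_enum _))|]; last first.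
  by move=> v _; apply: sumr_ge0.
rewrite psumr_eq0 // => /allP/(_ w (mem_index_enum _)).
by rewrite euw mul1r sqrf_eq0 subr_eq0 => /eqP.
Qed.

(* e_s - e_t is orthogonal to ker L, hence lies in the row space of L. *)
Lemma potential_exists s t m : e s m -> e m t ->
  exists f, forall u, lap f u = dipole s t u.
Proof.
move=> esm emt.
have ker_st (c : 'cV[R]_#|T|) : laplacian R e *m c = 0 ->
    c (enum_rank s) 0 = c (enum_rank t) 0.
  move=> Lc; pose g u := c (enum_rank u) 0.
  have g_harm v : lap g v = 0.
    have gc : col_of g = c by apply/colP => i; rewrite mxE /g enum_valK.
    by rewrite -(enum_rankK v) -laplacian_col gc Lc mxE.
  by rewrite -/(g s) -/(g t) (harmonic_edge_eq g_harm esm) (harmonic_edge_eq g_harm emt).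
have : ((\col_i dipole s t (enum_val i))^T <= laplacian R e)%MS.
  rewrite submxE; apply/eqP/matrixP => i j; rewrite !mxE.
  have Lc : laplacian R e *m col j (cokermx (laplacian R e)) = 0.
    by rewrite colE mulmxA mulmx_coker mul0mx.
  have := ker_st _ Lc; rewrite !mxE => K.
  under eq_bigr => k _ do rewrite !mxE.
  rewrite sum_enum_rank.
  under eq_bigr => u _ do rewrite enum_rankK /dipole mulrBl.
  rewrite sumrB.
  under eq_bigr => u _ do rewrite mulrC.
  under [X in _ - X]eq_bigr => u _ do rewrite mulrC.
  by rewrite !sumr_delta K subrr.
case/submxP => D HD; exists (fun u => D 0 (enum_rank u)) => u.
rewrite -(enum_rankK u) -laplacian_col.
have -> : col_of (fun u => D 0 (enum_rank u)) = D^T.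
  by apply/colP => i; rewrite !mxE enum_valK.
have : (D *m laplacian R e)^T = \col_i dipole s t (enum_val i).
  by rewrite -HD trmxK.
by rewrite trmx_mul tr_laplacian => ->; rewrite mxE.
Qed.

End GraphLaplacian.

Section QuadraticForms.
Variable R : realFieldType.

(* Lagrange's identity: the defect is half of sum_(i,j) (a_i b_j - a_j b_i)^2. *)
Lemma cauchy_schwarz_sum (I : finType) (a b : I -> R) :
  (\sum_i a i * b i) ^+ 2 <= (\sum_i a i ^+ 2) * (\sum_i b i ^+ 2).
Proof.
have prod_sum (f g : I -> R) :
    (\sum_i f i) * (\sum_j g j) = \sum_i \sum_j f i * g j.
  by rewrite big_distrl /=; apply: eq_bigr => i _; rewrite big_distrr.
have lagrange : \sum_i \sum_j (a i * b j - a j * b i) ^+ 2 =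
    2 * ((\sum_i a i ^+ 2) * (\sum_i b i ^+ 2) - (\sum_i a i * b i) ^+ 2).
  have -> : \sum_i \sum_j (a i * b j - a j * b i) ^+ 2 =
      \sum_i \sum_j (a i ^+ 2 * b j ^+ 2) + \sum_i \sum_j (a j ^+ 2 * b i ^+ 2)
      - 2 * \sum_i \sum_j (a i * b i * (a j * b j)).
    rewrite -big_split /= big_distrr /= -sumrB; apply: eq_bigr => i _.
    rewrite -big_split /= big_distrr /= -sumrB; apply: eq_bigr => j _; ring.
  rewrite [X in _ + X - _]exchange_big /= -!prod_sum expr2 prod_sum; ring.
rewrite -subr_ge0 -(@pmulr_rge0 _ 2) // -lagrange.
by do 2![apply: sumr_ge0 => ? _]; exact: sqr_ge0.
Qed.

Definition dot n (u v : 'rV[R]_n) : R := (u *m v^T) 0 0.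

Definition qf n (M : 'M[R]_n) (y : 'rV[R]_n) : R := dot (y *m M) y.

Definition frob2 n (M : 'M[R]_n) : R := \sum_i \sum_j M i j ^+ 2.

Lemma dotE n (u v : 'rV[R]_n) : dot u v = \sum_i u 0 i * v 0 i.
Proof. by rewrite /dot mxE; apply: eq_bigr => i _; rewrite mxE. Qed.

Lemma dotC n (u v : 'rV[R]_n) : dot u v = dot v u.
Proof. by rewrite !dotE; apply: eq_bigr => i _; rewrite mulrC. Qed.

Lemma dot_ge0 n (u : 'rV[R]_n) : 0 <= dot u u.
Proof. by rewrite dotE; apply: sumr_ge0 => i _; rewrite -expr2 sqr_ge0. Qed.

Lemma dot_gt0 n (u : 'rV[R]_n) : u != 0 -> 0 < dot u u.
Proof.
move=> u0; rewrite lt_def dot_ge0 andbT; apply: contraNneq u0 => uu0.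
by apply/eqP/mul_rV_tr_eq0/matrixP => i j; rewrite !ord1 [RHS]mxE.
Qed.

Lemma dotDl n (u v w : 'rV[R]_n) : dot (u + v) w = dot u w + dot v w.
Proof. by rewrite !dotE -big_split; apply: eq_bigr => i _; rewrite mxE mulrDl. Qed.

Lemma dotZl n a (u w : 'rV[R]_n) : dot (a *: u) w = a * dot u w.
Proof. by rewrite !dotE big_distrr; apply: eq_bigr => i _; rewrite mxE -mulrA. Qed.

Lemma dotNl n (u w : 'rV[R]_n) : dot (- u) w = - dot u w.
Proof. by rewrite -scaleN1r dotZl mulN1r. Qed.

Lemma dotDr n (u v w : 'rV[R]_n) : dot w (u + v) = dot w u + dot w v.
Proof. by rewrite dotC dotDl !(dotC w). Qed.

Lemma dotZr n a (u w : 'rV[R]_n) : dot w (a *: u) = a * dot w u.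
Proof. by rewrite dotC dotZl dotC. Qed.

Lemma dot0l n (u : 'rV[R]_n) : dot 0 u = 0.
Proof. by rewrite /dot mul0mx mxE. Qed.

Lemma dot_mulmx n (u v : 'rV[R]_n) (M : 'M[R]_n) : dot (u *m M) v = dot u (v *m M^T).
Proof. by rewrite /dot trmx_mul trmxK mulmxA. Qed.

Lemma dot_le_mean n (u v : 'rV[R]_n) : dot u v <= (dot u u + dot v v) / 2.
Proof.
rewrite !dotE -big_split /= big_distrl /=; apply: ler_sum => i _.
rewrite ler_pdivlMr // -subr_ge0.
have -> : u 0 i * u 0 i + v 0 i * v 0 i - u 0 i * v 0 i * 2 = (u 0 i - v 0 i) ^+ 2.
  by ring.
exact: sqr_ge0.
Qed.

Lemma frob2_ge0 n (M : 'M[R]_n) : 0 <= frob2 M.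
Proof. by do 2![apply: sumr_ge0 => ? _]; exact: sqr_ge0. Qed.

Lemma dot_mulmx_le n (y : 'rV[R]_n) (M : 'M[R]_n) :
  dot (y *m M) (y *m M) <= frob2 M * dot y y.
Proof.
have -> : frob2 M * dot y y = \sum_j (\sum_i y 0 i ^+ 2) * (\sum_i M i j ^+ 2).
  rewrite /frob2 exchange_big /= big_distrl /=; apply: eq_bigr => j _.
  by rewrite mulrC dotE; congr (_ * _); apply: eq_bigr => i _; rewrite expr2.
rewrite dotE; apply: ler_sum => j _; rewrite -expr2 mxE.
exact: (cauchy_schwarz_sum (fun i => y 0 i) (fun i => M i j)).
Qed.

Lemma qf_le_frob2 n (M : 'M[R]_n) y : qf M y <= (frob2 M + 1) * dot y y.
Proof.
apply: le_trans (dot_le_mean _ _) _.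
have := dot_mulmx_le y M; have := dot_ge0 y; have := frob2_ge0 M.
have := dot_ge0 (y *m M); nra.
Qed.

Lemma dot_const1 n : dot (const_mx 1 : 'rV[R]_n) (const_mx 1) = n%:R.
Proof.
rewrite dotE; under eq_bigr => i _ do rewrite !mxE mulr1.
by rewrite sumr_const card_ord.
Qed.

(* Testing positivity on y - w/K with w = y B, K = |B|_F^2 + 1, gives
   |y B|^2 <= K q(y), and |y|^2 <= |B^-1|_F^2 |y B|^2. *)
Lemma psd_unit_coercive n (B : 'M[R]_n) : B^T = B -> (forall y, 0 <= qf B y) ->
  B \in unitmx -> exists2 d : R, 0 < d & forall y, d * dot y y <= qf B y.
Proof.
move=> sB pB uB; set K := frob2 B + 1; set S := frob2 (invmx B).
have K0 : 0 < K by rewrite /K ltr_wpDl ?frob2_ge0.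
have S0 : 0 <= S by exact: frob2_ge0.
exists (1 / (K * S + 1)); first by rewrite divr_gt0 // ltr_wpDl // mulr_ge0 // ltW.
move=> y; set w := y *m B.
have qf_shift : qf B (y - K^-1 *: w) =
    qf B y - 2 * K^-1 * dot w w + K^-1 ^+ 2 * qf B w.
  rewrite /qf mulmxDl -scaleNr -scalemxAl !dotDl !dotDr !dotZl !dotZr.
  have -> : dot (w *m B) y = dot w w by rewrite dot_mulmx sB.
  rewrite -/(qf B y) -/(qf B w) -/w; ring.
have Hw : K^-1 * qf B w <= dot w w.
  by rewrite ler_pdivrMl // qf_le_frob2.
have ww : dot w w <= K * qf B y.
  have := pB (y - K^-1 *: w); rewrite qf_shift => H.
  have Ki : 0 < K^-1 by rewrite invr_gt0.
  have : K^-1 * dot w w <= qf B y by nra.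
  by rewrite ler_pdivrMl.
have yy : dot y y <= S * dot w w.
  by have := dot_mulmx_le w (invmx B); rewrite /w -mulmxA mulmxV // mulmx1.
rewrite mul1r ler_pdivrMl ?ltr_wpDl ?mulr_ge0 ?(ltW K0) //.
have := pB y; nra.
Qed.

End QuadraticForms.

Section Poincare.
Variable R : realType.
Variables (n : nat) (N : 'M[R]_n).
Local Notation ones := (const_mx 1 : 'rV[R]_n).
Hypotheses (sN : N^T = N) (N1 : ones *m N = 0) (pN : forall y, 0 <= qf N y).

Lemma qf_add_const y a : qf N (y + a *: ones) = qf N y.
Proof.
have dN z : dot z (ones *m N) = 0 by rewrite N1 dotC dot0l.
rewrite /qf mulmxDl -scalemxAl N1 scaler0 addr0 dotDr dotZr.
by rewrite (dot_mulmx y ones) sN dN mulr0 addr0.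
Qed.

(* If mu is a Poincare constant on ones^perp, either it can be improved, or
   N - mu + ((mu + 1)/n) J is a singular PSD matrix, whose kernel vectors are
   mu-eigenvectors of N orthogonal to ones. *)
Lemma poincare_improve_or_eigen (mu : R) : (0 < n)%N ->
  (forall z, dot z ones = 0 -> mu * dot z z <= qf N z) ->
  (exists2 d, 0 < d & forall z, dot z ones = 0 -> (mu + d) * dot z z <= qf N z)
  \/ (exists2 v, v != 0 & dot v ones = 0 /\ v *m N = mu *: v).
Proof.
move=> n0 Hmu; have nR : 0 < n%:R :> R by rewrite ltr0n.
set k := (mu + 1) / n%:R.
set B := N - mu%:M + k *: (ones^T *m ones).
have yB y : y *m B = y *m N - mu *: y + (k * dot y ones) *: ones.
  rewrite /B !mulmxDr mulmxN mul_mx_scalar -scalemxAr mulmxA.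
  by rewrite [y *m ones^T]mx11_scalar mul_scalar_mx scalerA.
have qB y : qf B y = qf N y - mu * dot y y + k * dot y ones ^+ 2.
  by rewrite /qf yB !dotDl dotNl !dotZl -/(qf N y) (dotC ones y); ring.
pose proj y := y - (dot y ones / n%:R) *: ones.
have proj_orth y : dot (proj y) ones = 0.
  by rewrite dotDl dotNl dotZl dot_const1 mulfVK ?subrr // gt_eqF.
have qB_proj y : qf B y = qf N (proj y) - mu * dot (proj y) (proj y)
                          + (dot y ones / n%:R) ^+ 2 * n%:R.
  rewrite qB /proj -scaleNr qf_add_const !dotDl !dotDr !dotZl !dotZr.
  rewrite dot_const1 (dotC ones y) /k; field; exact: lt0r_neq0.
have pB y : 0 <= qf B y.
  rewrite qB_proj; apply: addr_ge0; first by rewrite subr_ge0 Hmu.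
  by rewrite mulr_ge0 ?sqr_ge0.
have sB : B^T = B.
  by rewrite /B !linearD /= linearN /= linearZ /= sN tr_scalar_mx trmx_mul trmxK.
case: (boolP (B \in unitmx)) => uB.
  left; have [d d0 Hd] := psd_unit_coercive sB pB uB; exists d => // z z1.
  by have := Hd z; rewrite qB z1 expr0n mulr0 addr0 mulrDl; lra.
right; have [v vB v0] := nonunitmx_ker uB.
have v1 : dot v ones = 0.
  have := qB_proj v; rewrite {1}/qf vB dot0l => H.
  have := Hmu _ (proj_orth v).
  have : 0 <= (dot v ones / n%:R) ^+ 2 * n%:R by rewrite mulr_ge0 // sqr_ge0.
  move=> h1 h2; have /eqP : (dot v ones / n%:R) ^+ 2 * n%:R = 0 by lra.
  by rewrite mulf_eq0 sqrf_eq0 mulf_eq0 invr_eq0 (gt_eqF nR) !orbF => /eqP.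
exists v => //; split=> //.
by move/eqP: vB; rewrite yB v1 mulr0 scale0r addr0 subr_eq0 => /eqP.
Qed.

Lemma gap_orth_eigen_eq0 (c mu : R) (v : 'rV[R]_n) : (0 < n)%N ->
  spectral_gap_ge N c -> mu < c ->
  v *m N = mu *: v -> dot v ones = 0 -> v = 0.
Proof.
move=> n0 gap mu_c vN v1; apply/eqP; apply: contraT => v0.
have [|mu0 rk] := gap mu _ mu_c; first by apply/eigenvalueP; exists v.
have onesE : (ones <= eigenspace N mu)%MS.
  by rewrite sub_kermx mulmxBr N1 mu0 mul_mx_scalar scale0r subr0.
have vE : (v <= eigenspace N mu)%MS.
  by rewrite sub_kermx mulmxBr vN mul_mx_scalar subrr.
have nR : n%:R != 0 :> R by rewrite pnatr_eq0 -lt0n.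
have r1 : \rank ones = 1%N.
  rewrite rank_rV; apply/eqP; rewrite eqb1; apply: contra nR => /eqP o0.
  by rewrite -dot_const1 o0 dot0l.
have Eones : (eigenspace N mu <= ones)%MS.
  by rewrite -(mxrank_leqif_sup onesE).2 r1 rk.
have /sub_rVP [a va] := submx_trans vE Eones.
move: v1 v0; rewrite va dotZl dot_const1 => /eqP.
by rewrite mulf_eq0 (negbTE nR) orbF => /eqP->; rewrite scale0r eqxx.
Qed.

(* The optimal Poincare constant mu (an infimum of Rayleigh quotients)
   cannot be improved, so mu < c would produce a forbidden eigenvector. *)
Lemma spectral_gap_poincare (c : R) : spectral_gap_ge N c ->
  forall y, dot y ones = 0 -> c * dot y y <= qf N y.
Proof.
move=> gap y0 y01; case: (lerP (c * dot y0 y0) (qf N y0)) => // Hlt; exfalso.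
have y00 : y0 != 0 by apply: contraTneq Hlt => ->; rewrite /qf mul0mx !dot0l mulr0 ltxx.
have n0 : (0 < n)%N.
  by case: n y0 y00 {y01 Hlt} => // y0; rewrite (thinmx0 y0) eqxx.
pose E : set R := fun r => exists2 y, y != 0 & dot y ones = 0 /\ r = qf N y / dot y y.
have Ey0 : E (qf N y0 / dot y0 y0) by exists y0.
have E0 : lbound E 0.
  by move=> r [y _ [_ ->]]; apply: divr_ge0 => //; exact: dot_ge0.
have hE : has_lbound E by exists 0.
set mu := inf E.
have Hmu z : dot z ones = 0 -> mu * dot z z <= qf N z.
  move=> z1; case: (eqVneq z 0) => [->|z0]; first by rewrite /qf mul0mx !dot0l mulr0.
  by have := ge_inf hE (ex_intro2 _ _ z z0 (conj z1 erefl)); rewrite ler_pdivlMr ?dot_gt0.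
have mu_c : mu < c.
  have := ge_inf hE Ey0; rewrite ler_pdivlMr ?dot_gt0 // => H.
  by rewrite -(ltr_pM2r (dot_gt0 y00)); apply: le_lt_trans H Hlt.
case: (poincare_improve_or_eigen n0 Hmu) => [[d d0 Hd]|[v v0 [v1 vN]]].
  suff : mu + d <= mu by lra.
  apply: lb_le_inf; first by exists (qf N y0 / dot y0 y0).
  by move=> r [z z0 [z1 ->]]; rewrite ler_pdivlMr ?dot_gt0 ?Hd.
by move/eqP: v0; apply; exact: gap_orth_eigen_eq0 gap mu_c vN v1.
Qed.

End Poincare.

Section RegularPoincare.
Variables (R : realType) (n d : nat) (E : rel 'I_n) (c : R).
Hypotheses (Ereg : regular_simple E d) (d0 : (0 < d)%N).

Lemma norm_laplacianE i j :
  norm_laplacian R E i j = (i == j)%:R - (E i j)%:R / d%:R.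
Proof.
case: Ereg => _ _ Edeg.
by rewrite mxE !Edeg -expr2 sqrtr_sqr ger0_norm ?ler0n.
Qed.

Lemma qf_norm_laplacian (r : 'rV[R]_n) :
  qf (norm_laplacian R E) r = d%:R^-1 * \sum_i r 0 i * lap E (fun j => r 0 j) i.
Proof.
case: Ereg => _ _ Edeg.
have dR : d%:R != 0 :> R by rewrite pnatr_eq0 -lt0n.
rewrite /qf /lap dotE; under eq_bigr => j _ do rewrite mxE big_distrl /=.
rewrite exchange_big /= big_distrr /=; apply: eq_bigr => i _.
under eq_bigr => j _ do rewrite norm_laplacianE.
rewrite !big_distrr /=.
have -> : \sum_j d%:R^-1 * (r 0 i * ((E i j)%:R * (r 0 i - r 0 j))) =
    r 0 i * r 0 i * (d%:R^-1 * \sum_j (E i j)%:R) -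
    \sum_j r 0 i * ((E i j)%:R / d%:R) * r 0 j.
  by rewrite !big_distrr -sumrB /=; apply: eq_bigr => j _; ring.
rewrite -gdegE Edeg mulVf // mulr1.
under eq_bigr => j _ do rewrite mulrBr mulrBl.
rewrite sumrB (bigD1 i) //= eqxx big1 ?addr0 ?mulr1 //.
by move=> j /negbTE; rewrite eq_sym => ->; rewrite !mulr0 mul0r.
Qed.

Lemma regular_gap_poincare : spectral_gap_ge (norm_laplacian R E) c ->
  forall y : 'I_n -> R, \sum_i y i = 0 ->
  c * d%:R * \sum_i y i ^+ 2 <= \sum_i y i * lap E y i.
Proof.
move=> gap y sy; have [Esym _ Edeg] := Ereg.
have dR : 0 < d%:R :> R by rewrite ltr0n.
have sN : (norm_laplacian R E)^T = norm_laplacian R E.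
  by apply/matrixP => i j; rewrite mxE !norm_laplacianE eq_sym Esym.
have N1 : (const_mx 1 : 'rV[R]_n) *m norm_laplacian R E = 0.
  apply/rowP => j; rewrite !mxE.
  under eq_bigr => i _ do rewrite mxE mul1r norm_laplacianE Esym.
  rewrite sumrB -big_distrl /= -gdegE Edeg mulfV ?gt_eqF //.
  by rewrite (bigD1 j) //= eqxx big1 ?addr0 ?subrr // => i /negbTE ->.
have pN r : 0 <= qf (norm_laplacian R E) r.
  by rewrite qf_norm_laplacian mulr_ge0 ?invr_ge0 ?ler0n ?lap_ge0.
have := spectral_gap_poincare sN N1 pN gap (y := \row_i y i).
rewrite qf_norm_laplacian /lap !dotE.
under eq_bigr => i _ do rewrite !mxE mulr1.
move=> /(_ sy); under eq_bigr => i _ do rewrite !mxE -expr2.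
under [X in _ <= _ * X -> _]eq_bigr => i _ do under eq_bigr => j _ do rewrite !mxE.
under [X in _ <= _ * X -> _]eq_bigr => i _ do rewrite !mxE.
by move=> H; rewrite (mulrC c) -mulrA -ler_pdivlMl.
Qed.

End RegularPoincare.

Lemma sum_indicator (R : pzSemiRingType) (I : finType) (A : {set I}) :
  \sum_i ((i \in A)%:R : R) = #|A|%:R.
Proof.
rewrite -sum1_card natr_sum [RHS]big_mkcond /=; apply: eq_bigr => i _.
by case: (i \in A).
Qed.

(* From P^2 <= J Y and k Y <= P: P <= J / k and Y <= J / k^2, so
   J (1 - 1/k^2) <= X and J + P <= J (1 + 1/k) <= X k / (k - 1). *)
Lemma energy_excess_le (R : realFieldType) (k J P Y X : R) :
  1 < k -> 0 <= Y -> 0 <= J -> k * Y <= P -> P ^+ 2 <= J * Y -> J <= X + Y ->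
  J + P - X <= X / (k - 1).
Proof.
move=> k1 Y0 J0 kYP PJY JXY.
have k0 : 0 < k := lt_trans ltr01 k1.
have kY0 : 0 <= k * Y := mulr_ge0 (ltW k0) Y0.
have P0 : 0 <= P := le_trans kY0 kYP.
have JY : k ^+ 2 * Y <= J.
  case: (ltrP 0 Y) => Yp; last by rewrite (_ : Y = 0) ?mulr0 //; lra.
  have : 0 <= (P - k * Y) * (P + k * Y) by apply: mulr_ge0; lra.
  by rewrite -(ler_pM2r Yp); nra.
have PJ : k * P <= J.
  case: (ltrP 0 P) => Pp; last by rewrite (_ : P = 0) ?mulr0 //; lra.
  have h1 : J * (k * Y) <= J * P by rewrite ler_wpM2l.
  have h2 : k * P ^+ 2 <= k * (J * Y) by rewrite ler_wpM2l // ltW.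
  by rewrite -(ler_pM2r Pp); nra.
rewrite ler_pdivlMr ?subr_gt0 // -(ler_pM2l k0).
have : J * (k + 1) * (k - 1) <= k ^+ 2 * X by nra.
nra.
Qed.

Section SourcePotential.
Variables (R : realType) (n x : nat) (E : rel 'I_n) (N1 : {set 'I_n}) (k : R).
Variables (W : 'I_n -> R) (vs : R).
Hypotheses (Esym : forall i j, E i j = E j i) (n0 : (0 < n)%N) (k0 : 0 < k).
Hypothesis poincare : forall y : 'I_n -> R,
  \sum_i y i = 0 -> k * \sum_i y i ^+ 2 <= \sum_i y i * lap E y i.
Hypotheses (cardN1 : #|N1| = x) (x0 : (0 < x)%N).
(* Kirchhoff's law at s and at each i of S_1, for the potentials W on S_1 and
   vs at s, relative to t, which is adjacent to every i. *)
Hypothesis source_eq : \sum_i (i \in N1)%:R * (vs - W i) = 1.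
Hypothesis node_eq : forall i, lap E W i + (i \in N1)%:R * (W i - vs) + W i = 0.

Local Notation ind i := ((i \in N1)%:R : R).
Let current i := ind i * (vs - W i).
Let y i := W i - n%:R^-1.

Let nR : 0 < n%:R :> R. Proof. by rewrite ltr0n. Qed.
Let xR : 0 < x%:R :> R. Proof. by rewrite ltr0n. Qed.

Let ind_idem i : ind i * ind i = ind i.
Proof. by case: (i \in N1); rewrite ?mul1r ?mul0r. Qed.

Let sum_ind : \sum_i ind i = x%:R.
Proof. by rewrite sum_indicator cardN1. Qed.

Let sum_current : \sum_i current i = 1.
Proof. exact: source_eq. Qed.

Lemma sum_potential : \sum_i W i = 1.
Proof.
have : \sum_i (lap E W i + ind i * (W i - vs) + W i) = 0.
  by rewrite big1 // => i _; exact: node_eq.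
rewrite !big_split /= sum_lap // add0r.
have -> : \sum_i ind i * (W i - vs) = - \sum_i current i.
  by rewrite -sumrN; apply: eq_bigr => i _; rewrite /current; ring.
rewrite sum_current; lra.
Qed.

Lemma sum_centered : \sum_i y i = 0.
Proof.
rewrite sumrB sum_potential sumr_const card_ord -[n%:R^-1 *+ n]mulr_natl.
by rewrite mulfV ?subrr // lt0r_neq0.
Qed.

Lemma energy_balance :
  \sum_i y i * lap E y i + \sum_i y i ^+ 2 = \sum_i current i * y i.
Proof.
have lapy i : lap E y i = current i - W i.
  rewrite -[RHS](addr0 _) -(node_eq i) /current /lap.
  have -> : \sum_j (E i j)%:R * (y i - y j) = \sum_j (E i j)%:R * (W i - W j).
    by apply: eq_bigr => j _; rewrite /y; congr (_ * _); ring.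
  ring.
rewrite -big_split /=.
have -> : \sum_i (y i * lap E y i + y i ^+ 2) =
          \sum_i current i * y i - n%:R^-1 * \sum_i y i.
  by rewrite big_distrr /= -sumrB; apply: eq_bigr => i _; rewrite lapy /y; ring.
by rewrite sum_centered mulr0 subr0.
Qed.

Lemma source_potential_decomp :
  vs = \sum_i current i ^+ 2 + \sum_i current i * y i + n%:R^-1.
Proof.
have vsE : \sum_i current i * (current i + W i) = vs * \sum_i current i.
  rewrite big_distrr /=; apply: eq_bigr => i _.
  by rewrite /current; case: (i \in N1); rewrite /= ?mul1r ?mul0r; ring.
have cW : \sum_i current i * W i =
          \sum_i current i * y i + n%:R^-1 * \sum_i current i.
  by rewrite big_distrr /= -big_split /=; apply: eq_bigr => i _; rewrite /y; ring.
rewrite sum_current mulr1 in vsE; rewrite sum_current [n%:R^-1 * _]mulr1 in cW.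
by rewrite -{1}vsE -addrA -cW -big_split /=; apply: eq_bigr => i _; ring.
Qed.

(* With t = vs - 1/n we have j = ind (t - y) and sum_(i in N_1) y_i = x t - 1,
   so |j|^2 = 2 t - x t^2 + sum_(i in N_1) y_i^2, and 2 t - x t^2 <= 1/x. *)
Lemma current_energy_le : \sum_i current i ^+ 2 <= x%:R^-1 + \sum_i y i ^+ 2.
Proof.
set t := vs - n%:R^-1; set Sy := \sum_i ind i * y i.
have currentE i : current i = ind i * (t - y i).
  by rewrite /current /t /y; congr (_ * _); ring.
have Sy_eq : Sy = x%:R * t - \sum_i current i.
  rewrite -sum_ind big_distrl /= -sumrB; apply: eq_bigr => i _.
  by rewrite currentE; ring.
have J_eq : \sum_i current i ^+ 2 =
    x%:R * t ^+ 2 - 2 * t * Sy + \sum_i ind i * y i ^+ 2.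
  rewrite /Sy -sum_ind big_distrl !big_distrr -sumrB -big_split /=.
  apply: eq_bigr => i _; rewrite currentE exprMn expr2 ind_idem; ring.
have indy : \sum_i ind i * y i ^+ 2 <= \sum_i y i ^+ 2.
  by apply: ler_sum => i _; case: (i \in N1); rewrite ?mul1r ?mul0r ?sqr_ge0.
have : x%:R * t ^+ 2 - 2 * t * Sy <= x%:R^-1.
  rewrite Sy_eq sum_current -subr_ge0.
  have -> : x%:R^-1 - (x%:R * t ^+ 2 - 2 * t * (x%:R * t - 1)) =
            (x%:R * t - 1) ^+ 2 / x%:R by field; exact: lt0r_neq0.
  by rewrite divr_ge0 ?sqr_ge0 // ltW.
lra.
Qed.

Lemma current_energy_ge : x%:R^-1 <= \sum_i current i ^+ 2.
Proof.
have := cauchy_schwarz_sum (fun i => ind i) current.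
have -> : \sum_i ind i * current i = \sum_i current i.
  by apply: eq_bigr => i _; rewrite /current mulrA ind_idem.
have -> : \sum_i ind i ^+ 2 = x%:R.
  by rewrite -sum_ind; apply: eq_bigr => i _; rewrite expr2 ind_idem.
by rewrite sum_current expr1n -ler_pdivrMl // mulr1.
Qed.

Lemma source_potential_bounds :
  x%:R^-1 <= vs /\ vs - x%:R^-1 <= x%:R^-1 / k + n%:R^-1.
Proof.
have Y0 : 0 <= \sum_i y i ^+ 2 by apply: sumr_ge0 => i _; exact: sqr_ge0.
have J0 : 0 <= \sum_i current i ^+ 2 by apply: sumr_ge0 => i _; exact: sqr_ge0.
have kYP : (k + 1) * \sum_i y i ^+ 2 <= \sum_i current i * y i.
  by rewrite -energy_balance mulrDl mul1r lerD2r poincare ?sum_centered.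
have P0 : 0 <= \sum_i current i * y i.
  by apply: le_trans kYP; rewrite mulr_ge0 // addr_ge0 // ltW.
have ninv0 : 0 <= n%:R^-1 :> R by rewrite invr_ge0 ltW.
have := energy_excess_le _ Y0 J0 kYP (cauchy_schwarz_sum current y) current_energy_le.
rewrite addrK ltrDr => /(_ k0) excess.
have := current_energy_ge; rewrite source_potential_decomp; split; lra.
Qed.

End SourcePotential.

Section InducedResistance.
Variables (R : realType) (T : finType) (e : rel T) (U : {set T}).
Hypotheses (esym : forall u w, e u w = e w u) (eirr : forall u, e u u = false).

Definition unit_potential_in (s t : T) (F : T -> R) : Prop :=
  forall u, u \in U -> \sum_(w in U) (e u w)%:R * (F u - F w) = dipole R s t u.

Let esym_in : forall u w, @induced _ e U u w = @induced _ e U w u.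
Proof. by move=> u w; exact: esym. Qed.

Let eirr_in : forall u, @induced _ e U u u = false.
Proof. by move=> u; exact: eirr. Qed.

Lemma eff_res_in_potential s t F : s \in U -> t \in U ->
  unit_potential_in s t F -> eff_res_in R e U s t = F s - F t.
Proof.
move=> sU tU HF; rewrite /eff_res_in.
rewrite (insubT (fun x => x \in U) sU) (insubT (fun x => x \in U) tU).
rewrite (eff_res_potential esym_in eirr_in (f := fun w => F (val w))) // => u.
transitivity (dipole R s t (val u)); last by rewrite /dipole -!val_eqE.
by rewrite -HF ?(valP u) // big_sub.
Qed.

Lemma unit_potential_in_exists s t m : s \in U -> t \in U -> m \in U ->
  e s m -> e m t -> exists F, unit_potential_in s t F.
Proof.
move=> sU tU mU esm emt.
have [f Hf] := potential_exists R esym_in eirr_in (s := Sub s sU) (t := Sub t tU)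
  (m := Sub m mU) esm emt.
exists (fun v => if insub v is Some w then f w else 0) => u uU.
rewrite big_sub -[u]/(val (Sub u uU : {x | x \in U})) insubT.
under eq_bigr => w _ do rewrite valK.
by rewrite -[LHS]/(lap (@induced _ e U) f _) Hf /dipole -!val_eqE.
Qed.

End InducedResistance.

Section Construction.
Variables (R : realType) (n1 n2 : nat) (E1 : rel 'I_n1).
Variables (N1 : {set 'I_n1}) (N2 : {set 'I_n2}).
Hypotheses (E1sym : forall i j, E1 i j = E1 j i) (E1irr : forall i, ~~ E1 i i).

Local Notation G := (cgraph E1 N1 N2).
Local Notation s := (src n1 n2).
Local Notation t := (snk n1 n2).

Lemma cgraph_sym u w : G u w = G w u.
Proof. by case: u w => [[i|k]|[]] [[j|l]|[]] //=; rewrite E1sym. Qed.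

Lemma cgraph_irr u : G u u = false.
Proof. by case: u => [[i|k]|[]] //=; apply/negbTE. Qed.

Lemma big_U1 (F : cvert n1 n2 -> R) :
  \sum_(v in U1 n1 n2) F v = \sum_i F (inl (inl i)) + F s + F t.
Proof.
rewrite big_mkcond big_sumType big_sumType big_bool /=.
rewrite [X in _ + X + _]big1 ?addr0 => [|k _]; last by rewrite inE.
by rewrite !inE addrA; congr (_ + _ + _); apply: eq_bigr => i _; rewrite inE.
Qed.

Lemma big_U2 (F : cvert n1 n2 -> R) :
  \sum_(v in U2 n1 n2) F v = \sum_k F (inl (inr k)) + F s + F t.
Proof.
rewrite big_mkcond big_sumType big_sumType big_bool /=.
rewrite [X in X + _ + _]big1 ?add0r => [|i _]; last by rewrite inE.
by rewrite !inE addrA; congr (_ + _ + _); apply: eq_bigr => k _; rewrite inE.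
Qed.

Lemma eff_res_S1_bounds (x : nat) (k : R) : (0 < n1)%N -> 0 < k ->
  (forall y : 'I_n1 -> R, \sum_i y i = 0 ->
     k * \sum_i y i ^+ 2 <= \sum_i y i * lap E1 y i) ->
  #|N1| = x -> (0 < x)%N ->
  let r1 := eff_res_in R G (U1 n1 n2) s t in
  x%:R^-1 <= r1 /\ r1 - x%:R^-1 <= x%:R^-1 / k + n1%:R^-1.
Proof.
move=> n0 k0 poincare cardN1 x0 r1.
have [i0 i0N] : exists i0, i0 \in N1 by apply/set0Pn; rewrite -card_gt0 cardN1.
have iU i : (inl (inl i) : cvert n1 n2) \in U1 n1 n2 by rewrite inE.
have sU : s \in U1 n1 n2 by rewrite inE.
have tU : t \in U1 n1 n2 by rewrite inE.
have [F HF] := unit_potential_in_exists R cgraph_sym cgraph_irr sU tU (iU i0) i0N erefl.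
rewrite /r1 (eff_res_in_potential cgraph_sym cgraph_irr sU tU HF).
have := HF _ sU; rewrite big_U1 /dipole eqxx /= !mul0r !addr0 subr0 => source_eq.
have node_eq i : lap E1 (fun j => F (inl (inl j)) - F t) i
    + (i \in N1)%:R * (F (inl (inl i)) - F t - (F s - F t))
    + (F (inl (inl i)) - F t) = 0.
  have := HF _ (iU i); rewrite big_U1 /dipole /= mul1r subrr => <-.
  congr (_ + _ + _); last by congr (_ * _); ring.
  by apply: eq_bigr => j _; congr (_ * _); ring.
apply: (source_potential_bounds (W := fun i => F (inl (inl i)) - F t)
  (vs := F s - F t) E1sym n0 k0 poincare cardN1 x0 _ node_eq).
by rewrite -[RHS]source_eq; apply: eq_bigr => i _; congr (_ * _); ring.
Qed.

(* On S_2 the current splits evenly: potential 2/(ds - x) at s and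
   1/(ds - x) on N_2, measured from t. *)
Lemma eff_res_S2 (ds x : nat) : #|N2| = (ds - x)%N -> (x < ds)%N ->
  eff_res_in R G (U2 n1 n2) s t = 2 / (ds - x)%:R.
Proof.
move=> cardN2 xds; set m : R := (ds - x)%:R.
have m0 : m != 0 by rewrite pnatr_eq0 -lt0n subn_gt0.
have sU : s \in U2 n1 n2 by rewrite inE.
have tU : t \in U2 n1 n2 by rewrite inE.
pose F (v : cvert n1 n2) : R :=
  match v with inr true => 2 / m | inl (inr j) => (j \in N2)%:R / m | _ => 0 end.
have sumN2 : \sum_l ((l \in N2)%:R : R) / m = 1.
  by rewrite -big_distrl /= sum_indicator cardN2 mulfV.
rewrite (eff_res_in_potential (F := F) cgraph_sym cgraph_irr sU tU) /F ?subr0 //.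
move=> [[i|j]|[]] uU; rewrite big_U2 /dipole /=.
- by move: uU; rewrite inE.
- rewrite big1 => [|l _]; last by rewrite mul0r.
  by case: (j \in N2); rewrite /= ?mul1r ?mul0r; field.
- rewrite !mul0r !addr0 subr0 -[RHS]sumN2; apply: eq_bigr => l _.
  by case: (l \in N2); rewrite /= ?mul1r ?mul0r //; field.
- rewrite !mul0r !addr0 sub0r.
  transitivity (- \sum_l ((l \in N2)%:R : R) / m); last by rewrite sumN2.
  by rewrite -sumrN; apply: eq_bigr => l _; rewrite /= mul1r sub0r.
Qed.

End Construction.

Lemma ln_nat_ge_half (R : realType) (m : nat) : (2 <= m)%N -> 1 / 2 <= ln (m%:R : R).
Proof.
move=> m2; have m0 : 0 < m%:R :> R by rewrite ltr0n (leq_trans _ m2).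
have minv : m%:R^-1 <= 2^-1 :> R by rewrite lef_pV2 ?posrE ?ler_nat.
have := @le_ln1Dx R (m%:R^-1 - 1); rewrite [1 + _]addrC subrK lnV ?posrE //.
have : 0 < m%:R^-1 :> R by rewrite invr_gt0.
move=> minv0 H; have /H : -1 < m%:R^-1 - 1 :> R by lra.
lra.
Qed.

Lemma resistance_excess_le (R : realFieldType) (c r : R) (n1 d x : nat) :
  0 < c -> (0 < d)%N -> (0 < x)%N -> (d * x <= n1)%N ->
  x%:R^-1 <= r -> r - x%:R^-1 <= x%:R^-1 / (c * d%:R) + n1%:R^-1 ->
  `|r - x%:R^-1| <= (c^-1 + 1) / (d%:R * x%:R).
Proof.
move=> c0 d0 x0 dxn lb ub; rewrite ger0_norm ?subr_ge0 //.
have dx0 : 0 < d%:R * x%:R :> R by rewrite -natrM ltr0n muln_gt0 d0.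
apply: le_trans ub _; rewrite mulrDl mul1r.
have -> : x%:R^-1 / (c * d%:R) = c^-1 / (d%:R * x%:R).
  by field; rewrite !pnatr_eq0 -!lt0n d0 x0 lt0r_neq0.
by rewrite lerD2l lef_pV2 ?posrE ?(lt_le_trans dx0) -?natrM ?ler_nat.
Qed.

Theorem lemma5p1 (R : realType) (c : R) :
  0 < c ->
  exists C : R, 0 < C /\
  forall (n1 n2 d ds x : nat) (E1 : rel 'I_n1)
         (N1 : {set 'I_n1}) (N2 : {set 'I_n2}),
    (0 < d)%N -> (0 < x)%N -> (x <= ds)%N ->
    ds%:R * ln (n1%:R : R) <= d%:R ->
    ln (n1%:R : R) ^+ 2 <= d%:R ->
    (2 * d ^ 3 <= n1)%N ->
    regular_simple E1 d ->
    spectral_gap_ge (norm_laplacian R E1) c ->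
    #|N1| = x -> #|N2| = (ds - x)%N ->
    let r1 := eff_res_in R (cgraph E1 N1 N2) (U1 n1 n2) (src n1 n2) (snk n1 n2) in
    let r2 := eff_res_in R (cgraph E1 N1 N2) (U2 n1 n2) (src n1 n2) (snk n1 n2) in
    [/\ `|r1 - x%:R^-1| <= C * ln (n1%:R : R) / (d%:R * x%:R),
        `|r1 - x%:R^-1| <= C / (ds%:R * x%:R)
      & (x < ds)%N -> r2 = 2 / (ds - x)%:R].
Proof.
move=> c0; exists (2 * (c^-1 + 1)); split; first by rewrite mulr_gt0 ?addr_gt0 ?invr_gt0.
move=> n1 n2 d ds x E1 N1 N2 d0 x0 xds dsl _ dn reg gap cardN1 cardN2 r1 r2.
have [E1sym E1irr _] := reg.
have n12 : (2 <= n1)%N by apply: leq_trans dn; lia.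
have ln_half := ln_nat_ge_half R n12.
have ds2d : (ds <= 2 * d)%N.
  by rewrite -(ler_nat R) natrM; have : 0 <= ds%:R :> R by []; nra.
have dxn : (d * x <= n1)%N by apply: leq_trans dn; nia.
have dR : 0 < d%:R :> R by rewrite ltr0n.
have [lb ub] := eff_res_S1_bounds N2 E1sym E1irr (ltnW n12) (mulr_gt0 c0 dR)
  (regular_gap_poincare reg d0 gap) cardN1 x0.
have := resistance_excess_le c0 d0 x0 dxn lb ub; rewrite -/r1 => err.
have Cinv0 : 0 < c^-1 + 1 by rewrite addr_gt0 ?invr_gt0.
split=> [||x_ds]; last exact: eff_res_S2.
- apply: le_trans err _; rewrite ler_wpM2r ?invr_ge0 ?mulr_ge0 ?ler0n //.
  nra.
- have x0R : 0 < x%:R :> R by rewrite ltr0n.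
  have ds2dR : ds%:R <= 2 * d%:R :> R by rewrite -natrM ler_nat.
  have dsx : 0 < ds%:R * x%:R :> R by rewrite mulr_gt0 // ltr0n (leq_trans x0 xds).
  apply: le_trans err _; rewrite [2 * _]mulrC -mulrA ler_pM2l //.
  rewrite ler_pdivlMr // mulrC ler_pdivrMr ?mulr_gt0 //; nra.
Qed.
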